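(* Let $k\ge1$, $m_1,\dots,m_k\ge1$ integers, $s_1,\dots,s_k\in\{-1,1\}$, $w=m_1+\dots+m_k$, and let $\mathcal S(\zeta(m_1,\dots,m_k;s_1,\dots,s_k))$ denote the symbol defined in the context. (1) If at least one $m_i$ is different from $1$ and $(m_1,s_1)\neq(1,1)$, then $\mathcal S(\zeta(m_1,\dots,m_k;s_1,\dots,s_k))=0$. (2) For every $m\ge1$ and all $s_2,\dots,s_m\in\{-1,1\}$, $\mathcal S(\zeta(1,\dots,1;-1,s_2,\dots,s_m))=(1/2)^{\otimes m}$ $(=(-1)^m\,2^{\otimes m})$, i.e. it equals the symbol of $\frac{1}{m!}\ln^m\frac12$, so that $\mathcal S\big(\zeta(1,\dots,1;-1,s_2,\dots,s_m)-\frac1{m!}\ln^m\frac12\big)=0$.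
   Context: Colored multiple zeta values: $\zeta(m_1,\dots,m_k;s_1,\dots,s_k)=\sum_{0<n_1<\dots<n_k}\frac{s_1^{n_1}\cdots s_k^{n_k}}{n_1^{m_1}\cdots n_k^{m_k}}$. Put $\hat s_j=\prod_{i\le j}s_i$. Symbol calculus over $\mathbb Q$: let $V=\mathbb Q^\times\otimes_{\mathbb Z}\mathbb Q$ (a $\mathbb Q$-vector space in which torsion, in particular $-1$, becomes $0$); for $f\in\mathbb Q^\times$ write $f$ also for its image in $V$, so e.g. $(1/2)=-2$ in $V$. Tensors are taken in $V^{\otimes n}$, multilinear in the multiplicative sense ($\cdots\otimes(fg)\otimes\cdots=\cdots\otimes f\otimes\cdots+\cdots\otimes g\otimes\cdots$), and any formal tensor one of whose factors is the number $0$ is interpreted as $0\in V^{\otimes n}$. For $x,y$ define $\mu(x,y)=1-y/x$ if $x\neq0$ and $\mu(0,y)=y$. For a tuple $(a_1,\dots,a_n)$, $n\ge2$ (the ''decorated polygon'' $P(a_1,\dots,a_n)$ with root decoration $a_n$, attached to the multiple polylogarithm $G(a_{n-1},\dots,a_1;a_n)$), define $\mathcal S(a_1,\dots,a_n)\in V^{\otimes(n-1)}$ recursively by $\mathcal S(a_1,a_2)=\mu(a_1,a_2)$ and, for $n\ge3$, $\mathcal S(a_1,\dots,a_n)=\sum_{i=1}^{n-1}\mathcal S(a_1,\dots,\widehat{a_i},\dots,a_n)\otimes\mu(a_i,a_{i+1})-\sum_{i=2}^{n-1}\mathcal S(a_1,\dots,\widehat{a_i},\dots,a_n)\otimes\mu(a_i,a_{i-1})$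 (hat = omitted). The symbol of a colored MZV is defined as $\mathcal S(\zeta(m_1,\dots,m_k;s_1,\dots,s_k))=(-1)^w\,\mathcal S(\underbrace{0,\dots,0}_{m_k-1},\hat s_k,\underbrace{0,\dots,0}_{m_{k-1}-1},\hat s_{k-1},\dots,\underbrace{0,\dots,0}_{m_1-1},\hat s_1,1)$. The symbol of $\frac1{m!}\ln^m c$ is $c^{\otimes m}=c\otimes\cdots\otimes c$ ($m$ factors). *)

From HB Require Import structures.
From mathcomp Require Import all_boot all_order all_algebra.
Set Implicit Arguments. Unset Strict Implicit. Unset Printing Implicit Defensive.
Import Order.TTheory GRing.Theory Num.Theory.
Local Open Scope ring_scope.

(* ---------- Model of V^{\otimes n}, V = Q^x \otimes_Z Q ----------------
   V is identified with (+)_{p prime} Q via p-adic valuations, so V^{\otimes n}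
   is identified with finitely supported functions on n-tuples of primes.
   A formal tensor is a finite Q-linear combination of pure tensors
   f_1 (x) ... (x) f_n with f_i in Q; its coordinate at (p_1,...,p_n) is
   sum c * prod_i v_{p_i}(f_i).  The valuation of the number 0 is set to 0,
   which implements the convention that a tensor with a factor 0 is 0. *)

Definition ftensor := seq (rat * seq rat).

Definition vq (p : nat) (q : rat) : rat :=
  (logn p `|numq q|%N)%:R - (logn p `|denq q|%N)%:R.

Definition pure_coord (l : seq rat) (ps : seq nat) : rat :=
  if size l == size ps then \prod_(i < size l) vq (nth 0%N ps i) (nth 0 l i)
  else 0.

Definition coord (T : ftensor) (ps : seq nat) : rat :=
  \sum_(t <- T) t.1 * pure_coord t.2 ps.

Definition teq (T1 T2 : ftensor) : Prop := forall ps, coord T1 ps = coord T2 ps.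

Definition tsing (f : seq rat) : ftensor := [:: (1, f)].
Definition tapp (T : ftensor) (f : rat) : ftensor :=
  [seq (t.1, rcons t.2 f) | t <- T].
Definition tscale (c : rat) (T : ftensor) : ftensor :=
  [seq (c * t.1, t.2) | t <- T].

Definition mu (x y : rat) : rat := if x == 0 then y else 1 - y / x.

Definition del (i : nat) (a : seq rat) : seq rat := take i a ++ drop i.+1 a.

Fixpoint symb_fuel (fuel : nat) (a : seq rat) : ftensor :=
  match fuel with
  | 0%N => [::]
  | fuel'.+1 =>
    if size a == 2%N then tsing [:: mu (nth 0 a 0) (nth 0 a 1)]
    else if (size a < 2)%N then [::]
    else
      flatten [seq tapp (symb_fuel fuel' (del i a)) (mu (nth 0 a i) (nth 0 a i.+1))
              | i <- iota 0 (size a).-1]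
      ++ tscale (-1)
      (flatten [seq tapp (symb_fuel fuel' (del i a)) (mu (nth 0 a i) (nth 0 a i.-1))
              | i <- iota 1 (size a).-2])
  end.

Definition symb (a : seq rat) : ftensor := symb_fuel (size a) a.

Definition shat (s : seq rat) (j : nat) : rat := \prod_(i < j.+1) nth 0 s i.

(* the word (0^{m_k-1}, hat s_k, ..., 0^{m_1-1}, hat s_1, 1) *)
Definition zeta_word (m : seq nat) (s : seq rat) : seq rat :=
  flatten [seq nseq (nth 0%N m j).-1 0 ++ [:: shat s j] | j <- rev (iota 0 (size m))]
  ++ [:: 1].

Definition zeta_symb (m : seq nat) (s : seq rat) : ftensor :=
  tscale ((-1) ^+ sumn m) (symb (zeta_word m s)).

(* All decorations of a colored-MZV polygon with signs +-1 lie in {0, 1, -1},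
   so every [mu] occurring in the recursion is 0, 1, -1 or 2.  In V the first
   three vanish, hence a polygon with a zero decoration has symbol 0, and a
   polygon with decorations +-1 and n+2 vertices has symbol c(a) 2^{(x)(n+1)}.
   The recursion then becomes a telescoping identity for the integers c(a),
   solved by c(a) = (-1)^(t-1) binom(n, t-1), where t is the length of the final
   run of a (c(a) = 0 for constant a).  A weight with some m_i > 1 puts a zero
   into the word; for m = (1, ..., 1) and s_1 = -1 the word ends in (-1, 1), so
   t = 1 and c = 1, while (-1)^w 2^{(x)w} = (1/2)^{(x)w}. *)

From Pilot Require Import Defs.
From HB Require Import structures.
From mathcomp Require Import all_boot all_order all_algebra zify ring.
Import Order.TTheory GRing.Theory Num.Theory.
Local Open Scope ring_scope.

(* [all_algebra] exports another [coord] (coordinates in a vector space). *)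
Local Notation coord := Defs.coord.

Lemma coord_cat (T1 T2 : ftensor) ps :
  coord (T1 ++ T2) ps = coord T1 ps + coord T2 ps.
Proof. by rewrite /coord big_cat. Qed.

Lemma coord_tscale c T ps : coord (tscale c T) ps = c * coord T ps.
Proof. by rewrite /coord big_map mulr_sumr; apply: eq_bigr => t _; rewrite mulrA. Qed.

Lemma coord_flatten (F : nat -> ftensor) s ps :
  coord (flatten [seq F i | i <- s]) ps = \sum_(i <- s) coord (F i) ps.
Proof.
elim: s => [|i s IH]; first by rewrite big_nil /coord big_nil.
by rewrite /= coord_cat IH big_cons.
Qed.

Lemma coord_tsing l ps : coord (tsing l) ps = pure_coord l ps.
Proof. by rewrite /coord big_seq1 mul1r. Qed.

Lemma pure_coord_rcons l f ps q :
  pure_coord (rcons l f) (rcons ps q) = pure_coord l ps * vq q f.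
Proof.
rewrite /pure_coord !size_rcons eqSS; case: eqP => [E|_]; last by rewrite mul0r.
rewrite big_ord_recr /= !nth_rcons ltnn eqxx -E ltnn eqxx; congr (_ * _).
by apply: eq_bigr => i _; rewrite !nth_rcons -E ltn_ord.
Qed.

Lemma coord_tapp_rcons T f ps q : coord (tapp T f) (rcons ps q) = coord T ps * vq q f.
Proof.
rewrite /coord big_map mulr_suml; apply: eq_bigr => t _ /=.
by rewrite pure_coord_rcons mulrA.
Qed.

Lemma coord_tapp_nil T f : coord (tapp T f) [::] = 0.
Proof. by rewrite /coord big_map big1 // => t _; rewrite /pure_coord size_rcons mulr0. Qed.

Lemma vq0 q : vq q 0 = 0. Proof. by rewrite /vq /= logn0 logn1 subrr. Qed.
Lemma vq1 q : vq q 1 = 0. Proof. by rewrite /vq /= !logn1 subrr. Qed.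
Lemma vqN1 q : vq q (-1) = 0. Proof. by rewrite /vq /= !logn1 subrr. Qed.
Lemma vq2 q : vq q 2 = (q == 2%N)%:R.
Proof. by rewrite /vq /= logn_prime // logn1 subr0. Qed.
Lemma vq_half q : vq q (1 / 2) = - (q == 2%N)%:R.
Proof. by rewrite /vq /= logn1 logn_prime // sub0r. Qed.

Definition pm1 (x : rat) := (x == 1) || (x == -1).
Definition pm1_or0 (x : rat) := (x == 0) || pm1 x.

Lemma pm1P x : pm1 x -> x = 1 \/ x = -1.
Proof. by case/orP=> /eqP ->; [left|right]. Qed.

Lemma pm1_or0P x : pm1_or0 x -> [\/ x = 0, x = 1 | x = -1].
Proof. by case/orP=> [/eqP->|/pm1P[]->]; [apply: Or31|apply: Or32|apply: Or33]. Qed.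

Lemma pm1M x y : pm1 x -> pm1 y -> pm1 (x * y).
Proof. by move=> /pm1P[]-> /pm1P[]->. Qed.

Lemma vq_mu q x y : pm1_or0 x -> pm1_or0 y ->
  vq q (mu x y) = ((q == 2%N) && [&& x != 0, y != 0 & x != y])%:R.
Proof.
have vq_rat r : r \in [:: 0; 1; -1; 2] -> vq q r = ((q == 2%N) && (r == 2))%:R.
  by rewrite !inE => /or4P[]/eqP->; rewrite ?vq0 ?vq1 ?vqN1 ?vq2 ?andbF ?andbT.
by move=> /pm1_or0P[]-> /pm1_or0P[]->; rewrite vq_rat.
Qed.

Lemma size_del i (a : seq rat) : (i < size a)%N -> size (del i a) = (size a).-1.
Proof. by move=> lt; rewrite /del size_cat size_take size_drop lt; lia. Qed.

Lemma mem_del x i (a : seq rat) : x \in del i a -> x \in a.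
Proof. by rewrite /del mem_cat => /orP[/mem_take|/mem_drop]. Qed.

Lemma all_del P i (a : seq rat) : all P a -> all P (del i a).
Proof. by move=> /allP aP; apply/allP => x /mem_del /aP. Qed.

Lemma mem_del_nth x i (a : seq rat) : x \in a -> nth 0 a i != x -> x \in del i a.
Proof.
move=> xa; case: (ltnP i (size a)) => [lt ne|ge]; last first.
  by rewrite /del take_oversize // drop_oversize ?cats0 //; lia.
move: xa; rewrite -{1}(cat_take_drop i a) (drop_nth 0 lt) /del !mem_cat in_cons.
by rewrite eq_sym (negbTE ne).
Qed.

Lemma del_catl i (b c : seq rat) : (i < size b)%N -> del i (b ++ c) = del i b ++ c.
Proof.
move=> lt; rewrite /del take_cat drop_cat lt.
case: (ltnP i.+1 (size b)) => lt2; first by rewrite catA.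
have -> : (i.+1 - size b = 0)%N by lia.
by rewrite drop0 (drop_oversize lt2) cats0.
Qed.

Lemma del_catr j (b c : seq rat) : del (size b + j) (b ++ c) = b ++ del j c.
Proof.
rewrite /del take_cat drop_cat ltnNge leq_addr /= addKn.
have -> : ((size b + j).+1 < size b)%N = false by lia.
by rewrite subSn ?leq_addr // addKn catA.
Qed.

Lemma symb_rec (a : seq rat) : (2 < size a)%N -> symb a =
  flatten [seq tapp (symb (del i a)) (mu (nth 0 a i) (nth 0 a i.+1))
          | i <- iota 0 (size a).-1]
  ++ tscale (-1)
  (flatten [seq tapp (symb (del i a)) (mu (nth 0 a i) (nth 0 a i.-1))
          | i <- iota 1 (size a).-2]).
Proof.
rewrite /symb; case E: (size a) => [|n] // lt /=.
rewrite E !ifN; [|by case: n lt {E} => [|[|]]..].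
congr (flatten _ ++ tscale _ (flatten _)); apply/eq_in_map => i;
  by rewrite mem_iota => /andP[_ h]; rewrite size_del ?E //; lia.
Qed.

Lemma coord_symb_nil (a : seq rat) : (2 < size a)%N -> coord (symb a) [::] = 0.
Proof.
move=> lt; rewrite symb_rec // coord_cat coord_tscale !coord_flatten.
by rewrite !big1 ?mulr0 ?addr0 // => i _; rewrite coord_tapp_nil.
Qed.

Lemma coord_symb_rcons (a : seq rat) ps q : (2 < size a)%N ->
  coord (symb a) (rcons ps q) =
    \sum_(0 <= i < (size a).-1)
       coord (symb (del i a)) ps * vq q (mu (nth 0 a i) (nth 0 a i.+1))
  - \sum_(1 <= i < (size a).-1)
       coord (symb (del i a)) ps * vq q (mu (nth 0 a i) (nth 0 a i.-1)).
Proof.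
move=> lt; rewrite symb_rec // coord_cat coord_tscale !coord_flatten mulN1r.
rewrite /index_iota subn0 subn1.
by congr (_ - _); apply: eq_bigr => i _; rewrite coord_tapp_rcons.
Qed.

Definition jump (a : seq rat) (j : nat) : bool :=
  (0 < j)%N && (nth 0 a j.-1 != nth 0 a j).

Lemma jump0 a : jump a 0 = false. Proof. by []. Qed.

(* [t] is the length of the final run of [a]; it equals [size a] exactly when
   [a] is constant. *)
Definition run_coef (a : seq rat) : rat :=
  let t := find (fun y => y != last 0 a) (rev a) in
  if t == size a then 0 else (-1) ^+ t.-1 * 'C((size a).-2, t.-1)%:R.

Lemma nseqSr (T : Type) n (x : T) : nseq n.+1 x = rcons (nseq n x) x.
Proof. by elim: n => //= n ->. Qed.

Lemma run_coef_nseq n r : run_coef (nseq n r) = 0.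
Proof.
rewrite /run_coef rev_nseq size_nseq hasNfind ?size_nseq ?eqxx // has_nseq.
by case: n => //= n; rewrite negbK; elim: n.
Qed.

Lemma run_coef_run b x t r : x != r ->
  run_coef (b ++ x :: nseq t.+1 r) = (-1) ^+ t * 'C(size b + t, t)%:R.
Proof.
move=> xr; rewrite /run_coef; have -> : last 0 (b ++ x :: nseq t.+1 r) = r.
  by rewrite last_cat /=; elim: t.
rewrite rev_cat rev_cons rev_nseq cat_rcons find_cat has_nseq eqxx andbF.
rewrite size_nseq /= xr addn0 size_cat /= size_nseq ifN; last by lia.
by rewrite addn0 !addnS.
Qed.

Lemma last_run_decomp (a : seq rat) :
  a = nseq (size a) (last 0 a) \/
  exists b x t r, x != r /\ a = b ++ x :: nseq t.+1 r.
Proof.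
elim/last_ind: a => [|a y [E|[b [x [t [r [xr E]]]]]]]; first by left.
- case: a E => [|z a] E; first by left.
  case: (eqVneq (last 0 (z :: a)) y) => [ay|ne].
    by left; rewrite last_rcons size_rcons nseqSr {1}E ay.
  right; exists (nseq (size a) (last z a)), (last z a), 0%N, y; split=> //.
  by rewrite {1}E /=; elim: (size a) => //= k ->.
- rewrite E; case: (eqVneq y r) => [->|ne].
    by right; exists b, x, t.+1, r; rewrite rcons_cat rcons_cons -nseqSr.
  right; exists (b ++ x :: nseq t r), r, 0%N, y; split; first by rewrite eq_sym.
  by rewrite rcons_cat rcons_cons -catA nseqSr -!cats1 -catA.
Qed.

Section FinalRun.

Variables (b : seq rat) (x r : rat) (n t : nat).
Hypotheses (xr : x != r) (size_bt : (size b + t)%N = n.+1).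

Local Notation a := (b ++ x :: nseq t.+1 r).
Local Notation p := (size b).

Lemma jump_final_run i : (p < i < p + t.+2)%N -> jump a i = (i == p.+1).
Proof.
move=> /andP[pi ib]; have nth_run j : (p < j < p + t.+2)%N -> nth 0 a j = r.
  move=> /andP[pj jb]; rewrite -cat_rcons nth_cat size_rcons ltnNge pj nth_nseq /=.
  by rewrite ifT //; lia.
rewrite /jump; case: (eqVneq i p.+1) => [->|ne].
  by rewrite (nth_run p.+1) ?nth_cat ?ltnn ?subnn /= ?xr //; lia.
by rewrite !nth_run ?eqxx ?andbF //; lia.
Qed.

Lemma run_coef_del_prefix i : (i < p)%N ->
  run_coef (del i a) = (-1) ^+ t * 'C(n, t)%:R.
Proof.
move=> ip; rewrite del_catl // run_coef_run // size_del //.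
by have -> : (p.-1 + t = n)%N by lia.
Qed.

Lemma run_coef_del_pivot : ~~ jump a p ->
  run_coef (del p a) = (-1) ^+ t * 'C(n, t)%:R.
Proof.
have -> : del p a = b ++ nseq t.+1 r by rewrite -{1}[p]addn0 del_catr.
case/lastP: b size_bt => [|b' y] hbt.
  by rewrite run_coef_nseq bin_small ?mulr0 //; move: hbt => /=; lia.
have -> : jump (rcons b' y ++ x :: nseq t.+1 r) (size (rcons b' y)) = (y != x).
  by rewrite /jump size_rcons /= !nth_cat size_rcons ltnS leqnn ltnn subnn nth_rcons ltnn eqxx.
rewrite negbK => /eqP ->.
rewrite cat_rcons run_coef_run //.
by move: hbt; rewrite size_rcons addSn => -[->].
Qed.

Lemma telescope_prefix :
  \sum_(0 <= i < p.+1) run_coef (del i a) * ((jump a i.+1)%:R - (jump a i)%:R)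
  = (-1) ^+ t * 'C(n, t)%:R.
Proof.
set g := _ * _%:R; rewrite big_nat_recr // (jump_final_run p.+1) ?eqxx; last by lia.
rewrite (eq_big_nat _ _ (F2 := fun i => g * ((jump a i.+1)%:R - (jump a i)%:R))); last first.
  by move=> i /andP[_ ip]; rewrite run_coef_del_prefix.
rewrite -mulr_sumr telescope_sumr // jump0.
by case: (boolP (jump a p)) => [_ | /run_coef_del_pivot ->]; rewrite /g /=; ring.
Qed.

Lemma telescope_suffix :
  \sum_(p.+1 <= i < n.+2) run_coef (del i a) * ((jump a i.+1)%:R - (jump a i)%:R)
  = (-1) ^+ t * ('C(n.+1, t)%:R - 'C(n, t)%:R).
Proof.
case: (posnP t) => [t0 | tpos].
  by rewrite big_geq ?t0 ?bin0 ?subrr ?mulr0 //; lia.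
rewrite big_ltn; last by lia.
rewrite big1_seq => [|i]; last first.
  rewrite mem_index_iota => /andP[hi1 hi2]; rewrite !jump_final_run; [|lia..].
  have [-> ->] : (i.+1 == p.+1) = false /\ (i == p.+1) = false by split; lia.
  by rewrite subrr mulr0.
rewrite !jump_final_run ?eqxx; [|lia..].
have -> : del p.+1 a = b ++ x :: nseq t.-1.+1 r.
  by rewrite prednK // -[p.+1]addn1 del_catr /del /= drop0.
have -> : (p.+2 == p.+1) = false by lia.
rewrite run_coef_run //; have -> : (p + t.-1 = n)%N by lia.
by move: tpos; case: t size_bt => // t' _ _; rewrite binS natrD exprS /=; ring.
Qed.

End FinalRun.

Lemma run_coef_telescope n (a : seq rat) : size a = n.+3 ->
  \sum_(0 <= i < n.+2) run_coef (del i a) * ((jump a i.+1)%:R - (jump a i)%:R)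
  = run_coef a.
Proof.
move=> sa; case: (last_run_decomp a) => [E|[b [x [t [r [xr E]]]]]].
  have ac : all (pred1 (last 0 a)) a by apply/all_pred1P.
  rewrite [in RHS]E run_coef_nseq big1 // => i _.
  by rewrite (all_pred1P _ _ (all_del _ i _ ac)) run_coef_nseq mul0r.
have hbt : (size b + t = n.+1)%N by move: sa; rewrite E size_cat /= size_nseq; lia.
rewrite E (big_cat_nat _ (n := (size b).+1)) //; last by lia.
rewrite (telescope_prefix _ _ _ _ _ xr hbt) (telescope_suffix _ _ _ _ _ xr hbt).
by rewrite run_coef_run // hbt /=; ring.
Qed.

Lemma run_coef_pair x y : run_coef [:: x; y] = (x != y)%:R.
Proof. by rewrite /run_coef /= eqxx /=; case: (x != y). Qed.

Lemma coord_symb_pair x y ps : pm1_or0 x -> pm1_or0 y ->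
  coord (symb [:: x; y]) ps =
  if 0 \in [:: x; y] then 0 else (ps == [:: 2%N])%:R * run_coef [:: x; y].
Proof.
move=> x01 y01; rewrite /symb /= coord_tsing run_coef_pair /pure_coord.
case: ps => [|q [|q' ps]] /=; first by rewrite mul0r if_same.
  rewrite big_ord1 vq_mu // eqseq_cons andbT.
  by move: x01 y01 => /pm1_or0P[]-> /pm1_or0P[]->; case: (q == 2%N).
by rewrite eqseq_cons andbF mul0r if_same.
Qed.

Lemma coord_symb n (a : seq rat) ps : size a = n.+2 -> all pm1_or0 a ->
  coord (symb a) ps = if 0 \in a then 0 else (ps == nseq n.+1 2%N)%:R * run_coef a.
Proof.
elim: n a ps => [|n IH] a ps sa a01.
  by case: a sa a01 => [|x [|y []]] // _ /and3P[x01 y01 _]; apply: coord_symb_pair.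
have IHdel i ps' : (i < n.+3)%N -> coord (symb (del i a)) ps' =
    if 0 \in del i a then 0 else (ps' == nseq n.+1 2%N)%:R * run_coef (del i a).
  by move=> lti; apply: IH; [rewrite size_del sa | apply: all_del].
case/lastP: ps => [|ps q].
  by rewrite coord_symb_nil ?sa // mul0r if_same.
have letter i : (i < n.+3)%N -> pm1_or0 (nth 0 a i).
  by rewrite -sa => /(mem_nth 0) /(allP a01).
set c := (rcons ps q == _)%:R.
have term i j : (i < n.+3)%N -> (j < n.+3)%N ->
    coord (symb (del i a)) ps * vq q (mu (nth 0 a i) (nth 0 a j)) =
    if 0 \in a then 0 else c * (run_coef (del i a) * (nth 0 a i != nth 0 a j)%:R).
  move=> lti ltj; rewrite IHdel // vq_mu ?letter //.
  case: (boolP (0 \in a)) => a0.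
    case: (eqVneq (nth 0 a i) 0) => [->|ai0]; first by rewrite andbF mulr0.
    by rewrite mem_del_nth // mul0r.
  have a_neq0 k : (k < n.+3)%N -> nth 0 a k != 0.
    by rewrite -sa => ltk; apply: contra a0 => /eqP <-; apply: mem_nth.
  rewrite (negbTE (contra (@mem_del 0 i a) a0)) !a_neq0 //.
  rewrite /c (nseqSr _ n.+1) eqseq_rcons.
  by case: (ps == _); case: (q == 2%N); rewrite /= ?mul0r ?mul1r ?mulr0 ?mulr1.
rewrite coord_symb_rcons ?sa //=.
rewrite (eq_big_nat _ _ (F2 := fun i =>
    if 0 \in a then 0 else c * (run_coef (del i a) * (jump a i.+1)%:R))); last first.
  by move=> i /andP[_ hi]; apply: term; lia.
rewrite [X in _ - X](eq_big_nat _ _ (F2 := fun i =>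
    if 0 \in a then 0 else c * (run_coef (del i a) * (jump a i)%:R))); last first.
  by move=> i /andP[hi1 hi2]; rewrite term /jump ?hi1 1?eq_sym //; lia.
case: ifP => a0; first by rewrite !big1 // subrr.
rewrite -!mulr_sumr -mulrBr -(run_coef_telescope n a sa); congr (_ * _).
rewrite [in RHS](eq_bigr _ (fun i _ => mulrBr _ _ _)) sumrB; congr (_ - _).
by rewrite [in RHS]big_ltn // jump0 mulr0 add0r.
Qed.

Lemma shat_pm1 (s : seq rat) j : all pm1 s -> (j < size s)%N -> pm1 (shat s j).
Proof.
move=> s_pm1 ltj; apply: (big_ind pm1) => // [|i _]; first exact: pm1M.
by apply: (allP s_pm1); apply: mem_nth; apply: leq_trans ltj.
Qed.

Lemma size_zeta_word (m : seq nat) (s : seq rat) : all (fun mi => 0 < mi)%N m ->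
  size (zeta_word m s) = (sumn m).+1.
Proof.
move=> /allP m_pos; rewrite /zeta_word size_cat size_flatten /shape -map_comp addn1.
congr _.+1; rewrite -{3}(mkseq_nth 0%N m) /mkseq map_rev sumn_rev.
congr sumn; apply/eq_in_map => j; rewrite mem_iota /= size_cat size_nseq addn1.
by move=> ltj; rewrite prednK //; apply: m_pos; rewrite mem_nth.
Qed.

Lemma sumn_gt0 (m : seq nat) :
  (0 < size m)%N -> all (fun mi => 0 < mi)%N m -> (0 < sumn m)%N.
Proof. by case: m => //= m0 m _ /andP[m0_pos _]; rewrite addn_gt0 m0_pos. Qed.

Lemma zeta_word_pm1_or0 (m : seq nat) (s : seq rat) : all pm1 s -> size s = size m ->
  all pm1_or0 (zeta_word m s).
Proof.
move=> s_pm1 ss; apply/allP => x; rewrite /zeta_word mem_cat mem_seq1.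
case/orP=> [|/eqP->] //; case/flattenP => l /mapP[j]; rewrite mem_rev mem_iota => ltj ->.
rewrite mem_cat mem_nseq mem_seq1 => /orP[/andP[_ /eqP->] // | /eqP->].
by rewrite /pm1_or0 shat_pm1 ?orbT ?ss.
Qed.

Lemma mem0_zeta_word (m : seq nat) (s : seq rat) :
  all pm1 s -> size s = size m -> all (fun mi => 0 < mi)%N m ->
  (0 \in zeta_word m s) = has (fun mi => mi != 1%N) m.
Proof.
move=> s_pm1 ss /allP m_pos; rewrite /zeta_word mem_cat mem_seq1 eq_sym oner_eq0 orbF.
apply/flattenP/(has_nthP 0%N) => [[l /mapP[j]]|[j ltj mj]].
  rewrite mem_rev mem_iota /= => ltj ->; rewrite mem_cat mem_nseq mem_seq1.
  case/orP=> [/andP[m_gt1 _]|/eqP sj0].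
    by exists j => //; move: m_gt1; case: (nth 0%N m j) => [|[|]].
  by have := shat_pm1 _ j s_pm1; rewrite ss -sj0 => /(_ ltj) /pm1P[].
exists (nseq (nth 0%N m j).-1 0 ++ [:: shat s j]).
  by apply: map_f; rewrite mem_rev mem_iota.
rewrite mem_cat mem_nseq eqxx andbT; have := m_pos _ (mem_nth 0%N ltj).
by move: mj; case: (nth 0%N m j) => [|[|]].
Qed.

Lemma zeta_word_ones n (s : seq rat) :
  zeta_word (nseq n.+1 1%N) s = [seq shat s j | j <- rev (iota 1 n)] ++ [:: nth 0 s 0; 1].
Proof.
rewrite /zeta_word size_nseq.
have -> : [seq nseq (nth 0%N (nseq n.+1 1%N) j).-1 0 ++ [:: shat s j] | j <- rev (iota 0 n.+1)]
    = [seq [:: shat s j] | j <- rev (iota 0 n.+1)].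
  apply/eq_in_map => j; rewrite mem_rev mem_iota add0n => /andP[_ ltj].
  by rewrite nth_nseq ltj.
by rewrite flatten_map1 /= rev_cons map_rcons cat_rcons /shat big_ord1.
Qed.

Lemma pure_coord_half n ps :
  pure_coord (nseq n (1 / 2)) ps = (-1) ^+ n * (ps == nseq n 2%N)%:R.
Proof.
rewrite /pure_coord size_nseq; case: eqP => [->|ne]; last first.
  have -> : (ps == nseq n 2%N) = false by apply/eqP => E; apply: ne; rewrite E size_nseq.
  by rewrite mulr0.
under eq_bigr => i _ do rewrite nth_nseq ltn_ord vq_half.
elim: ps => [|p ps IH]; first by rewrite big_ord0.
by rewrite big_ord_recl /= IH eqseq_cons; case: (p == 2%N); rewrite /= exprS; ring.
Qed.

Theorem proposition4 :
  (forall (m : seq nat) (s : seq rat),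
     (0 < size m)%N -> size s = size m ->
     all (fun mi => 0 < mi)%N m ->
     all (fun si => (si == 1) || (si == -1)) s ->
     has (fun mi => mi != 1%N) m ->
     (nth 0%N m 0, nth 0 s 0) != (1%N, 1) ->
     teq (zeta_symb m s) [::])
  /\
  (forall (n : nat) (s : seq rat),
     (0 < n)%N -> size s = n ->
     nth 0 s 0 = -1 ->
     all (fun si => (si == 1) || (si == -1)) s ->
     teq (zeta_symb (nseq n 1%N) s) (tsing (nseq n (1 / 2)))).
Proof.
split=> [m s m_ne0 ss m_pos s_pm1 m_not1 _ ps | [|n] s // _ sn s1 s_pm1 ps].
  have [k sw] : exists k, size (zeta_word m s) = k.+2.
    by exists (sumn m).-1; rewrite size_zeta_word // prednK // sumn_gt0.
  rewrite /zeta_symb coord_tscale (coord_symb _ _ _ sw) ?zeta_word_pm1_or0 //.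
  by rewrite mem0_zeta_word // m_not1 mulr0 /coord big_nil.
have sw : size (zeta_word (nseq n.+1 1%N) s) = n.+2.
  by rewrite size_zeta_word ?all_nseq // sumn_nseq mul1n.
rewrite /zeta_symb coord_tscale (coord_symb _ _ _ sw) ?zeta_word_pm1_or0 ?size_nseq //.
have -> : (0 \in zeta_word (nseq n.+1 1%N) s) = false.
  by rewrite mem0_zeta_word ?size_nseq ?all_nseq // has_nseq eqxx.
rewrite coord_tsing pure_coord_half zeta_word_ones s1 (run_coef_run _ _ 0) //.
by rewrite sumn_nseq mul1n expr0 bin0 mul1r mulr1.
Qed.
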